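(* Let $\boldsymbol x^*$ be a pure Nash equilibrium of $\mathcal L(n,S)$ satisfying the vertex property, and let $[a,b]$ be an $\boldsymbol x^*$-half interval. Then $\lambda([a,b])\le\Lambda/n$, where $\Lambda=\lambda(S)$.
   Context: Network: $(V,E)$ is a finite connected graph with no vertex of degree $2$; each edge $e$ has a length $\lambda(e)>0$. $S$ is the metric measure space obtained by identifying each edge with a segment of length $\lambda(e)$, with length measure $\lambda$ and shortest-path distance $d$. A leaf is a vertex of degree $1$. Location game $\mathcal L(n,S)$: $n$ players each choose a point of $S$. Consumers are distributed according to $\lambda$, and each shops at a closest occupied location. Consumers equidistant from several closest occupied locations are split equally among those locations, and the share of a location is split equally among the players located there. Payoff is the mass of consumers attracted. Nash equilibria are pure. Vertex property: every vertex of degree $\ge3$ is occupied. For a profile $\boldsymbol x$ with the vertex property, a segment $[a,b]$ contained in an edge $e$ is an $\boldsymbol x$-half interval if one of the following holds (with the roles of $a$ and $b$ interchangeable): (i) $a=x_i$ for some player $i$, $b$ is a leaf endpoint of $e$, and no player is located in $(a,b]$; (ii) $a=x_i$ and $x_\ell\in e$ for players $i,\ell$, no player is located strictly between $a$ and $x_\ell$, and $b$ is the midpoint between $a$ and $x_\ell$. *)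

From Stdlib Require Import Reals ClassicalEpsilon.
From mathcomp Require Import all_boot.
Set Implicit Arguments. Unset Strict Implicit. Unset Printing Implicit Defensive.

Local Open Scope R_scope.

Definition leRb (a b : R) : bool := if Rle_dec a b then true else false.
Definition eqRb (a b : R) : bool := if Req_EM_T a b then true else false.

(* infimum of a nonempty set bounded below (0 otherwise, never used) *)
Definition Rinf (A : R -> Prop) : R :=
  match excluded_middle_informative
          (bound (fun y => A (- y)) /\ exists y, A (- y)) with
  | left H => - proj1_sig (completeness _ (proj1 H) (proj2 H))
  | right _ => 0
  end.

(* Riemann integral of f over [a,b] (0 if f is not Riemann integrable) *)
Definition RInt (f : R -> R) (a b : R) : R :=
  match excluded_middle_informative
          (exists v, exists pr : Riemann_integrable f a b, RiemannInt pr = v) with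
  | left H => proj1_sig (constructive_indefinite_description _ H)
  | right _ => 0
  end.

(* Each edge e joins src e and tgt e and is identified with the segment
   [0, len e]; parameter t measures the distance from src e. *)
Record network := Network {
  V : finType;
  E : finType;
  src : E -> V;
  tgt : E -> V;
  len : E -> R }.

Section Net.
Variable N : network.
Local Notation V := (V N).
Local Notation E := (E N).
Local Notation src := (@src N).
Local Notation tgt := (@tgt N).
Local Notation len := (@len N).

Definition incident (v : V) (e : E) : bool := (src e == v) || (tgt e == v).
Definition deg (v : V) : nat := #|[pred e | incident v e]|.
Definition leaf (v : V) : Prop := deg v = 1%N.
Definition adj : rel V :=
  fun u v => [exists e : E, ((src e == u) && (tgt e == v)) || ((src e == v) && (tgt e == u))].

Definition good_network : Prop :=
  (forall e, src e <> tgt e) /\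
  (forall e f, ((src e = src f /\ tgt e = tgt f) \/ (src e = tgt f /\ tgt e = src f)) -> e = f) /\
  (forall u v : V, connect adj u v) /\
  (forall v : V, deg v <> 2%N) /\
  (forall e, 0 < len e).

Definition Lambda : R := \big[Rplus/0]_(e : E) len e.

Definition point := (E * R)%type.
Definition valid_point (p : point) : Prop := 0 <= p.2 <= len p.1.

Definition vertex_of (p : point) : option V :=
  if eqRb p.2 0 then Some (src p.1)
  else if eqRb p.2 (len p.1) then Some (tgt p.1) else None.

(* equality of points of the quotient space S (edge endpoints identified) *)
Definition samept (p q : point) : bool :=
  ((p.1 == q.1) && eqRb p.2 q.2) ||
  ((vertex_of p == vertex_of q) && (vertex_of p != None)).

Fixpoint walk_end (u : V) (w : seq E) : option V :=
  match w with
  | [::] => Some u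
  | e :: w' => if src e == u then walk_end (tgt e) w'
               else if tgt e == u then walk_end (src e) w' else None
  end.
Definition walk_len (w : seq E) : R := \big[Rplus/0]_(e <- w) len e.

Definition dV (u v : V) : R :=
  Rinf (fun L => exists w, walk_end u w = Some v /\ L = walk_len w).

Definition dist (p q : point) : R :=
  let ep := [:: (src p.1, p.2); (tgt p.1, len p.1 - p.2)] in
  let eq := [:: (src q.1, q.2); (tgt q.1, len q.1 - q.2)] in
  let via := foldr Rmin (dV (src p.1) (src q.1) + p.2 + q.2)
               [seq a.2 + dV a.1 b.1 + b.2 | a <- ep, b <- eq] in
  if p.1 == q.1 then Rmin (Rabs (p.2 - q.2)) via else via.

Definition profile (n : nat) := 'I_n -> point.

Definition valid_profile n (x : profile n) : Prop := forall i, valid_point (x i).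

Definition closest n (x : profile n) (c : point) (i : 'I_n) : bool :=
  [forall j, leRb (dist c (x i)) (dist c (x j))].

(* number of distinct closest occupied locations to c *)
Definition nb_closest_locs n (x : profile n) (c : point) : nat :=
  #|[pred j | closest x c j && [forall k : 'I_n, (k < j)%N ==> ~~ samept (x k) (x j)]]|.

Definition nb_colocated n (x : profile n) (i : 'I_n) : nat :=
  #|[pred j | samept (x j) (x i)]|.

Definition share n (x : profile n) (i : 'I_n) (c : point) : R :=
  if closest x c i then / (INR (nb_closest_locs x c) * INR (nb_colocated x i)) else 0.

Definition payoff n (x : profile n) (i : 'I_n) : R :=
  \big[Rplus/0]_(e : E) RInt (fun t => share x i (e, t)) 0 (len e).

Definition deviate n (x : profile n) (i : 'I_n) (y : point) : profile n :=
  fun j => if j == i then y else x j.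

Definition nash_equilibrium n (x : profile n) : Prop :=
  valid_profile x /\
  forall i y, valid_point y -> payoff (deviate x i y) i <= payoff x i.

Definition vertex_property n (x : profile n) : Prop :=
  forall v : V, (3 <= deg v)%N -> exists i, vertex_of (x i) = Some v.

Definition strictly_between (s t u : R) : Prop :=
  (s < t < u) \/ (u < t < s).

(* [a,b] ⊆ e with a = (e,sa), b = (e,sb) is an x-half interval
   (the endpoint named a is the one at a player). *)
Definition half_interval n (x : profile n) (e : E) (sa sb : R) : Prop :=
  0 <= sa <= len e /\ 0 <= sb <= len e /\
  (
    ((exists i, samept (x i) (e, sa)) /\
     ((sb = 0 /\ leaf (src e)) \/ (sb = len e /\ leaf (tgt e))) /\
     (forall j t, (strictly_between sa t sb \/ t = sb) ->
                  ~~ samept (x j) (e, t)))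
  \/
    (exists i l tl,
       samept (x i) (e, sa) /\ 0 <= tl <= len e /\ samept (x l) (e, tl) /\
       (forall j t, strictly_between sa t tl -> ~~ samept (x j) (e, t)) /\
       sb = (sa + tl) / 2) ).

End Net.

(* Since at each consumer the shares of all players sum to at most 1, the
   payoffs sum to at most Lambda, so some player earns at most Lambda / n.
   In equilibrium this player cannot gain by moving into the half interval:
   placed at the midpoint of the gap in case (ii), or just next to the player
   at a in case (i), it becomes the only closest location for a stretch of
   consumers as long as the half interval (up to an arbitrarily small loss in
   case (i)). For payoffs to be genuine Riemann integrals, shares must be
   piecewise constant along edges; they are, because distances to the players
   are piecewise affine. *)

From Stdlib Require Import Reals Lra Classical ClassicalEpsilon FunctionalExtensionality.
From mathcomp Require Import all_boot.
From Pilot Require Import Defs.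
From Coquelicot Require Import Coquelicot.
From HB Require Import structures.

Set Implicit Arguments. Unset Strict Implicit.
Local Open Scope R_scope.

HB.instance Definition _ := Monoid.isComLaw.Build R 0 Rplus
  (fun a b c => esym (Rplus_assoc a b c)) Rplus_comm Rplus_0_l.

Lemma big_Rplus_le (I : Type) (r : seq I) (P : pred I) (F G : I -> R) :
  (forall i, P i -> F i <= G i) ->
  \big[Rplus/0]_(i <- r | P i) F i <= \big[Rplus/0]_(i <- r | P i) G i.
Proof. by move=> FG; apply: big_ind2 => [|*|]; [lra|lra|exact: FG]. Qed.

Lemma big_Rplus_ge0 (I : Type) (r : seq I) (P : pred I) (F : I -> R) :
  (forall i, P i -> 0 <= F i) -> 0 <= \big[Rplus/0]_(i <- r | P i) F i.
Proof. by move=> F0; apply: big_ind => [|*|]; [lra|lra|exact: F0]. Qed.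

Lemma big_Rplus_const (I : finType) (P : pred I) (a : R) :
  \big[Rplus/0]_(i | P i) a = INR #|P| * a.
Proof.
rewrite big_const; elim: #|P| => [|k IH]; first by rewrite /=; ring.
by rewrite [iter _ _ _]/= IH S_INR; ring.
Qed.

Lemma exists_le_of_sum_le n (F : 'I_n -> R) c : (0 < n)%N ->
  \big[Rplus/0]_(i < n) F i <= INR n * c -> exists j, F j <= c.
Proof.
move=> n0 sumF; apply: NNPP => /not_ex_all_not above.
suff : \big[Rplus/0]_(i < n) c < \big[Rplus/0]_(i < n) F i.
  by rewrite big_Rplus_const card_ord; lra.
rewrite (bigD1 (Ordinal n0)) // [X in _ < X](bigD1 (Ordinal n0)) //=.
apply: Rplus_lt_le_compat; first exact: Rnot_le_lt.
by apply: big_Rplus_le => i _; apply: Rlt_le; apply: Rnot_le_lt.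
Qed.

Lemma Rinf_lb (A : R -> Prop) m a : (forall y, A y -> m <= y) -> A a -> Rinf A <= a.
Proof.
move=> Am Aa; rewrite /Rinf; case: excluded_middle_informative => [h|[]].
  case: completeness => l [ub _] /=.
  by have := ub (- a) (eq_ind_r A Aa (Ropp_involutive a)); lra.
split; last by exists (- a); rewrite Ropp_involutive.
by exists (- m) => y /Am; lra.
Qed.

Lemma Rinf_glb (A : R -> Prop) m : (forall y, A y -> m <= y) -> (exists a, A a) ->
  m <= Rinf A.
Proof.
move=> Am [a Aa]; rewrite /Rinf; case: excluded_middle_informative => [h|[]].
  case: completeness => l [_ lub] /=.
  suff : l <= - m by lra.
  by apply: lub => y /Am; lra.
split; last by exists (- a); rewrite Ropp_involutive.
by exists (- m) => y /Am; lra.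
Qed.

(** * Riemann integrals of locally constant functions *)

Lemma Defs_RIntE (f : R -> R) a b : ex_RInt f a b -> Defs.RInt f a b = RInt f a b.
Proof.
move=> If; have pr := ex_RInt_Reals_0 _ _ _ If.
rewrite /Defs.RInt; case: excluded_middle_informative => [h|[]].
  case: constructive_indefinite_description => v [pr' prv] /=.
  by rewrite -prv (RInt_Reals _ _ _ pr); apply: RiemannInt_P5.
by exists (RiemannInt pr), pr.
Qed.

Definition const_right {A : Type} (f : R -> A) (t : R) : Prop :=
  exists d, 0 < d /\ forall u v, t < u < t + d -> t < v < t + d -> f u = f v.

Definition const_left {A : Type} (f : R -> A) (t : R) : Prop :=
  exists d, 0 < d /\ forall u v, t - d < u < t -> t - d < v < t -> f u = f v.

Lemma ex_RInt_glue (f : R -> R) a s s' : s <= s' -> ex_RInt f a s ->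
  (forall u v, s < u < s' -> s < v < s' -> f u = f v) -> ex_RInt f a s'.
Proof.
move=> ss' Ias fc; case: (Req_dec s s') => [<- //|neq].
apply: (ex_RInt_Chasles _ _ s) => //.
apply: (ex_RInt_ext (fun _ => f ((s + s') / 2))); last exact: ex_RInt_const.
rewrite Rmin_left ?Rmax_right; try lra.
by move=> u us; apply: fc; lra.
Qed.

(* The supremum of the [s] with [f] integrable on [[a, s]] is reached by left
   constancy and cannot be below [b] by right constancy. *)
Lemma ex_RInt_locally_const (f : R -> R) a b : a <= b ->
  (forall t, a <= t < b -> const_right f t) ->
  (forall t, a < t <= b -> const_left f t) -> ex_RInt f a b.
Proof.
move=> ab fr fl.
set S := fun s => a <= s <= b /\ ex_RInt f a s.
have Sa : S a by split; [lra | exact: ex_RInt_point].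
have [m [ub lub]] := completeness S (ex_intro _ b (fun s Ss => proj2 (proj1 Ss)))
  (ex_intro _ a Sa).
have am : a <= m by apply: ub.
have mb : m <= b by apply: lub => s [[_ ?] _].
have Sm : S m.
  case: (Req_dec m a) => [-> // | ma].
  have [d [d0 fd]] := fl m (conj (ltac:(lra) : a < m) mb).
  have [s [[s1 s2] sm]] : exists s, S s /\ m - Rmin d (m - a) < s.
    apply: NNPP => /not_ex_all_not notS.
    have : m <= m - Rmin d (m - a).
      by apply: lub => s Ss; apply: Rnot_lt_le => ls; apply: (notS s).
    by have := Rmin_glb_lt d (m - a) 0 d0 ltac:(lra); lra.
  have := Rmin_l d (m - a); have := ub s (conj s1 s2) => ??.
  split; first lra.
  by apply: (ex_RInt_glue (s := s)) => // u v ??; apply: fd; lra.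
case: (Rle_lt_or_eq_dec m b mb) => [mb' | <-]; last by case: Sm.
have [d [d0 fd]] := fr m (conj am mb').
have := Rmin_l (m + d / 2) b; have := Rmin_r (m + d / 2) b.
have := Rmin_glb_lt (m + d / 2) b m ltac:(lra) mb'.
move: (Rmin _ _) => s ???; exfalso; suff sm : s <= m by lra.
apply: ub; split; first lra.
by apply: (ex_RInt_glue (s := m)) => [||u v ??]; [lra | case: Sm | apply: fd; lra].
Qed.

(** * Piecewise affine functions *)

Definition affine_right (g : R -> R) (t : R) : Prop :=
  exists d a k, 0 < d /\ forall u, t < u < t + d -> g u = a + k * u.

Lemma affine_right_eq_near (g h : R -> R) t d : 0 < d ->
  (forall u, t < u < t + d -> h u = g u) -> affine_right g t -> affine_right h t.
Proof.
move=> d0 hg [d' [a [k [d'0 ga]]]].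
exists (Rmin d d'), a, k; split; first exact: Rmin_glb_lt.
have := Rmin_l d d'; have := Rmin_r d d' => ?? u ut.
by rewrite hg ?ga; lra.
Qed.

Lemma affine_right_const c t : affine_right (fun _ => c) t.
Proof. by exists 1, c, 0; split => [|u _]; [lra | ring]. Qed.

Lemma affine_right_id t : affine_right (fun u => u) t.
Proof. by exists 1, 0, 1; split => [|u _]; [lra | ring]. Qed.

Lemma affine_right_add g h t :
  affine_right g t -> affine_right h t -> affine_right (fun u => g u + h u) t.
Proof.
move=> [d [a [k [d0 ga]]]] [d' [a' [k' [d'0 ha]]]].
exists (Rmin d d'), (a + a'), (k + k'); split; first exact: Rmin_glb_lt.
have := Rmin_l d d'; have := Rmin_r d d' => ?? u ut.
by rewrite ga ?ha; [ring | lra | lra].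
Qed.

Lemma affine_right_scale c g t : affine_right g t -> affine_right (fun u => c * g u) t.
Proof.
move=> [d [a [k [d0 ga]]]].
by exists d, (c * a), (c * k); split => // u ut; rewrite ga //; ring.
Qed.

Lemma affine_right_opp g t : affine_right g t -> affine_right (fun u => - g u) t.
Proof.
move=> /(affine_right_scale (-1)); apply: affine_right_eq_near Rlt_0_1 _ => u _; ring.
Qed.

Lemma affine_right_sub g h t :
  affine_right g t -> affine_right h t -> affine_right (fun u => g u - h u) t.
Proof. by move=> ag /affine_right_opp; apply: affine_right_add. Qed.

(* Near [t], [c + k u] keeps the sign of its value at [t], or of [k] if that
   value is [0]. *)
Lemma affine_sign_right c k t : exists d, 0 < d /\
  ((forall u, t < u < t + d -> c + k * u <= 0) \/
   (forall u, t < u < t + d -> 0 < c + k * u)).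
Proof.
set v := c + k * t.
have kv : forall u, c + k * u = v + k * (u - t) by move=> u; rewrite /v; ring.
have := Rabs_pos k; case: (Req_dec v 0) => [v0 | vn0] k0.
  exists 1; split; first lra.
  by case: (Rle_lt_dec k 0) => k0'; [left | right] => u ut; rewrite kv v0; nra.
have v0 : 0 < Rabs v by apply: Rabs_pos_lt.
exists (Rabs v / (Rabs k + 1)); split; first by apply: Rdiv_lt_0_compat; lra.
have small : forall u, t < u < t + Rabs v / (Rabs k + 1) -> Rabs (k * (u - t)) < Rabs v.
  move=> u ut; rewrite Rabs_mult (Rabs_right (u - t)); last lra.
  apply: (Rle_lt_trans _ ((Rabs k + 1) * (u - t))); first nra.
  apply: (Rlt_le_trans _ ((Rabs k + 1) * (Rabs v / (Rabs k + 1)))).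
    by apply: Rmult_lt_compat_l; lra.
  by right; field; lra.
by case: (Rle_lt_dec v 0) => vs; [left | right] => u /small;
  rewrite kv; move: vs vn0; split_Rabs; lra.
Qed.

Lemma affine_right_le_or_gt g h t : affine_right g t -> affine_right h t ->
  exists d, 0 < d /\ ((forall u, t < u < t + d -> g u <= h u) \/
                      (forall u, t < u < t + d -> h u < g u)).
Proof.
move=> ag ah; have [d [a [k [d0 gh]]]] := affine_right_sub ag ah.
have [d' [d'0 sgn]] := affine_sign_right a k t.
exists (Rmin d d'); split; first exact: Rmin_glb_lt.
have := Rmin_l d d'; have := Rmin_r d d' => ??.
by case: sgn => sgn; [left | right] => u ut; have := gh u ltac:(lra);
  have := sgn u ltac:(lra); lra.
Qed.

Lemma affine_right_min g h t : affine_right g t -> affine_right h t ->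
  affine_right (fun u => Rmin (g u) (h u)) t.
Proof.
move=> ag ah; have [d [d0 [gh | hg]]] := affine_right_le_or_gt ag ah.
  by apply: (affine_right_eq_near d0 _ ag) => u /gh; apply: Rmin_left.
by apply: (affine_right_eq_near d0 _ ah) => u /hg /Rlt_le; apply: Rmin_right.
Qed.

Lemma affine_right_abs g t : affine_right g t -> affine_right (fun u => Rabs (g u)) t.
Proof.
move=> ag; have [d [d0 [g0 | g0]]] := affine_right_le_or_gt ag (affine_right_const 0 t).
  by apply: (affine_right_eq_near d0 _ (affine_right_opp ag)) => u /g0; apply: Rabs_left1.
by apply: (affine_right_eq_near d0 _ ag) => u /g0 /Rlt_le /Rle_ge; apply: Rabs_right.
Qed.

Lemma const_right_leRb g h t : affine_right g t -> affine_right h t ->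
  const_right (fun u => leRb (g u) (h u)) t.
Proof.
move=> ag ah; have [d [d0 gh]] := affine_right_le_or_gt ag ah.
exists d; split => // u v ut vt; rewrite /leRb.
by case: Rle_dec => ?; case: Rle_dec => ? //;
  case: gh => gh; have := gh u ut; have := gh v vt; lra.
Qed.

Lemma const_right_fin (T : finType) (A : Type) (F : T -> R -> A) t :
  (forall i, const_right (F i) t) -> const_right (fun u i => F i u) t.
Proof.
move=> Fc; suff [d [d0 Fd]] : exists d, 0 < d /\ forall u v, t < u < t + d ->
    t < v < t + d -> forall i, i \in enum T -> F i u = F i v.
  by exists d; split => // u v ut vt; apply: functional_extensionality => i;
    apply: Fd; rewrite ?mem_enum.
elim: (enum T) => [|i s [d [d0 Fd]]]; first by exists 1; split => //; lra.
have [d' [d'0 Fid]] := Fc i.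
exists (Rmin d d'); split; first exact: Rmin_glb_lt.
have := Rmin_l d d'; have := Rmin_r d d' => ?? u v ut vt j.
by rewrite in_cons => /orP [/eqP -> | js]; [apply: Fid | apply: Fd => //]; lra.
Qed.

(** * Distances *)

Section GraphDistance.
Variable N : network.
Hypothesis gN : good_network N.

Lemma len_ge0 (f : E N) : 0 <= len f.
Proof. by case: gN => _ [_ [_ [_ /(_ f) /Rlt_le]]]. Qed.

Lemma walk_len_cons (f : E N) w : walk_len (f :: w) = len f + walk_len w.
Proof. by rewrite /walk_len big_cons. Qed.

Lemma walk_len_cat (w1 w2 : seq (E N)) : walk_len (w1 ++ w2) = walk_len w1 + walk_len w2.
Proof. by rewrite /walk_len big_cat. Qed.

Lemma walk_len_ge0 (w : seq (E N)) : 0 <= walk_len w.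
Proof. by apply: big_Rplus_ge0 => f _; apply: len_ge0. Qed.

Lemma walk_end_cat (u : V N) (w1 w2 : seq (E N)) :
  walk_end u (w1 ++ w2) = obind (fun v => walk_end v w2) (walk_end u w1).
Proof.
elim: w1 u => [|f w IH] u //=.
by case: (src f == u); last case: (tgt f == u).
Qed.

Lemma walk_exists (u v : V N) : exists w, walk_end u w = Some v.
Proof.
case: gN => _ [_ [/(_ u v) /connectP [p + ->] _]].
elim: p u => [|y p IH] u /=; first by exists [::].
case/andP => /existsP [f uyf] /IH [w yw]; exists (f :: w) => /=.
case/orP: uyf => /andP [/eqP fu /eqP fy]; first by rewrite fu eqxx fy.
by rewrite fy eqxx; case: eqP => [<- | _]; rewrite fu.
Qed.

Lemma dV_le_walk (u v : V N) w : walk_end u w = Some v -> dV u v <= walk_len w.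
Proof.
move=> uw; apply: (Rinf_lb (m := 0)); last by exists w.
by move=> L [w' [_ ->]]; apply: walk_len_ge0.
Qed.

Lemma dV_ge m (u v : V N) :
  (forall w, walk_end u w = Some v -> m <= walk_len w) -> m <= dV u v.
Proof.
move=> mw; apply: Rinf_glb => [L [w [uw ->]] | ]; first exact: mw.
by have [w uw] := walk_exists u v; exists (walk_len w), w.
Qed.

Lemma dV_ge0 (u v : V N) : 0 <= dV u v.
Proof. by apply: dV_ge => w _; apply: walk_len_ge0. Qed.

Lemma dVii (u : V N) : dV u u = 0.
Proof.
apply: Rle_antisym (dV_ge0 u u).
by have := @dV_le_walk u u [::] erefl; rewrite /walk_len big_nil.
Qed.

Lemma dV_step (u v w : V N) (f : E N) :
  (src f == v) && (tgt f == w) || (src f == w) && (tgt f == v) ->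
  dV u w <= dV u v + len f.
Proof.
move=> fvw; suff : dV u w - len f <= dV u v by lra.
apply: dV_ge => p up; suff : dV u w <= walk_len (p ++ [:: f]).
  by rewrite walk_len_cat walk_len_cons /walk_len big_nil; lra.
apply: dV_le_walk; rewrite walk_end_cat up /=.
by case/orP: fvw => /andP [/eqP -> /eqP ->]; rewrite eqxx //; case: eqP => [-> | _].
Qed.

Lemma dV_src_tgt (u : V N) (f : E N) : dV u (tgt f) <= dV u (src f) + len f.
Proof. by apply: dV_step; rewrite !eqxx. Qed.

Lemma dV_tgt_src (u : V N) (f : E N) : dV u (src f) <= dV u (tgt f) + len f.
Proof. by apply: dV_step; rewrite !eqxx orbT. Qed.

Lemma leaf_incident_uniq (v : V N) (e f : E N) :
  leaf v -> incident v e -> incident v f -> e = f.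
Proof.
rewrite /leaf /deg => v1 ve vf; apply/eqP/negP => /negP ef.
suff : (1 < #|[pred g | incident v g]|)%N by rewrite v1.
by apply/card_gt1P; exists e, f.
Qed.

(* Every walk leaving a leaf starts with its only edge. *)
Lemma dV_leaf (v w : V N) (e : E N) : leaf v -> incident v e -> w <> v -> len e <= dV v w.
Proof.
move=> lv ve wv; apply: dV_ge => [[|f p]] /=; first by case=> /esym.
move=> fw; have vf : incident v f.
  by move: fw; rewrite /incident; case: (src f == v); case: (tgt f == v).
rewrite walk_len_cons (leaf_incident_uniq lv ve vf).
by have := walk_len_ge0 p; lra.
Qed.

End GraphDistance.

Lemma eqRbP a b : reflect (a = b) (eqRb a b).
Proof. by rewrite /eqRb; case: Req_EM_T => h; constructor. Qed.

Lemma leRbP a b : reflect (a <= b) (leRb a b).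
Proof. by rewrite /leRb; case: Rle_dec => h; constructor. Qed.

Section PointDistance.
Variable N : network.
Hypothesis gN : good_network N.

Lemma samept_refl (p : point N) : samept p p.
Proof. by rewrite /samept eqxx; apply/orP; left; apply/eqRbP. Qed.

Lemma samept_on_edge (p : point N) (e : E N) : p.1 = e -> samept p (e, p.2).
Proof. by case: p => f t /= ->; apply: samept_refl. Qed.

Lemma sameptP (p q : point N) :
  samept p q -> p = q \/ vertex_of p = vertex_of q /\ vertex_of p <> None.
Proof.
case/orP => [/andP [/eqP pq1 /eqRbP pq2] | /andP [/eqP pq /eqP pv]]; last by right.
by left; case: p q pq1 pq2 => [f t] [f' t'] /= -> ->.
Qed.

Lemma samept_vertex (p q : point N) :
  vertex_of p = vertex_of q -> vertex_of p <> None -> samept p q.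
Proof. by move=> pq pv; apply/orP; right; rewrite pq eqxx -pq; apply/eqP. Qed.

Lemma samept_sym (p q : point N) : samept p q -> samept q p.
Proof.
by case/sameptP => [-> | [pq pv]]; [apply: samept_refl | apply: samept_vertex; rewrite -pq].
Qed.

Lemma samept_trans (p q r : point N) : samept p q -> samept q r -> samept p r.
Proof.
case/sameptP => [-> // | [pq pv]] /sameptP [<- | [qr qv]]; apply: samept_vertex => //.
by rewrite pq.
Qed.

Lemma vertex_ofP (p : point N) v : vertex_of p = Some v ->
  p.2 = 0 /\ v = src p.1 \/ p.2 = len p.1 /\ v = tgt p.1.
Proof.
rewrite /vertex_of; case: eqRbP => [p0 [<-] | _]; first by left.
by case: eqRbP => // pl [<-]; right.
Qed.

Lemma dist_vertex (c p : point N) v : valid_point c -> vertex_of p = Some v ->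
  dist c p = Rmin (c.2 + dV (src c.1) v) (len c.1 - c.2 + dV (tgt c.1) v).
Proof.
case: c => g s [/= s0 sl]; case: p => f t /vertex_ofP /= [[-> ->] | [-> ->]];
  rewrite /dist /=.
- have := dV_tgt_src gN (src g) f; have := dV_tgt_src gN (tgt g) f.
  case: eqP => [<- | _]; last by rewrite /Rmin; repeat case: Rle_dec; lra.
  rewrite !(dVii gN); have := Rle_abs (s - 0).
  have := dV_ge0 gN (tgt g) (src g); have := dV_ge0 gN (src g) (tgt g).
  by rewrite /Rmin; repeat case: Rle_dec; lra.
- have := dV_src_tgt gN (src g) f; have := dV_src_tgt gN (tgt g) f.
  have := dV_ge0 gN (src g) (src f); have := dV_ge0 gN (tgt g) (src f).
  have := dV_ge0 gN (src g) (tgt f); have := dV_ge0 gN (tgt g) (tgt f).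
  case: eqP => [<- | _]; last by rewrite /Rmin; repeat case: Rle_dec; lra.
  rewrite !(dVii gN); have := Rle_abs (- (s - len g)); rewrite Rabs_Ropp.
  by rewrite /Rmin; repeat case: Rle_dec; lra.
Qed.

Lemma samept_dist (c p q : point N) : valid_point c -> samept p q -> dist c p = dist c q.
Proof.
move=> vc /sameptP [-> // | [pq]].
case pv: (vertex_of p) pq => [v|] // qv _.
by rewrite (dist_vertex vc pv) (dist_vertex vc (esym qv)).
Qed.

Lemma dist_same_edge_le (e : E N) u s : dist (e, u) (e, s) <= Rabs (u - s).
Proof. by rewrite /dist /= eqxx; apply: Rmin_l. Qed.

(* The shortest paths from [(e, u)] either stay in [e] or leave it through
   [src e] (length [u]) or [tgt e] (length [len e - u]). *)
Lemma dist_ge T (e : E N) u (q : point N) Ps Pt :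
  Ps <= dV (src e) (src q.1) + q.2 -> Ps <= dV (src e) (tgt q.1) + (len q.1 - q.2) ->
  Pt <= dV (tgt e) (src q.1) + q.2 -> Pt <= dV (tgt e) (tgt q.1) + (len q.1 - q.2) ->
  T <= u + Ps -> T <= len e - u + Pt -> (q.1 = e -> T <= Rabs (u - q.2)) ->
  T <= dist (e, u) q.
Proof.
move=> ???? Ts Tt Te; rewrite /dist /=.
case: eqP => [/esym/Te Tq | _]; first apply: Rmin_glb => //; repeat apply: Rmin_glb; lra.
Qed.

Lemma dist_ge_gap (e : E N) u (q : point N) a b : valid_point q ->
  0 <= a <= u -> u <= b <= len e -> (q.1 = e -> q.2 <= a \/ b <= q.2) ->
  Rmin (u - a) (b - u) <= dist (e, u) q.
Proof.
move=> [q0 ql] au ub qab; have := Rmin_l (u - a) (b - u); have := Rmin_r (u - a) (b - u).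
have := dV_ge0 gN (src e) (src q.1); have := dV_ge0 gN (src e) (tgt q.1).
have := dV_ge0 gN (tgt e) (src q.1); have := dV_ge0 gN (tgt e) (tgt q.1).
move=> ??????; apply: (dist_ge (Ps := 0) (Pt := 0)); try lra.
by move=> /qab [] ?; split_Rabs; lra.
Qed.

Lemma incident_src (f : E N) : incident (src f) f.
Proof. by rewrite /incident eqxx. Qed.

Lemma incident_tgt (f : E N) : incident (tgt f) f.
Proof. by rewrite /incident eqxx orbT. Qed.

Lemma dV_leaf_other (v w : V N) (e f : E N) :
  leaf v -> incident v e -> f <> e -> incident w f -> len e <= dV v w.
Proof.
move=> lv ve fe wf; apply: (dV_leaf gN lv ve) => wv.
by apply: fe; apply: (leaf_incident_uniq lv); rewrite // -wv.
Qed.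

Lemma dist_ge_src_leaf (e : E N) u (q : point N) b : leaf (src e) -> valid_point q ->
  0 <= u <= b -> b <= len e -> (q.1 = e -> b <= q.2) -> b - u <= dist (e, u) q.
Proof.
move=> lf [q0 ql] ub bl qb; have se := incident_src e.
have [Ps1 Ps2] : b <= dV (src e) (src q.1) + q.2 /\
                 b <= dV (src e) (tgt q.1) + (len q.1 - q.2).
  case: (eqVneq q.1 e) => [qe | /eqP qe].
    have := dV_leaf gN lf se (fun h => proj1 gN e (esym h)).
    by move: ql; rewrite qe (dVii gN); have := qb qe; lra.
  have := dV_leaf_other lf se qe (incident_src q.1).
  have := dV_leaf_other lf se qe (incident_tgt q.1).
  lra.
have := dV_ge0 gN (tgt e) (src q.1); have := dV_ge0 gN (tgt e) (tgt q.1) => ??.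
apply: (dist_ge (Ps := b) (Pt := 0)); try lra.
by move=> /qb ?; split_Rabs; lra.
Qed.

Lemma dist_ge_tgt_leaf (e : E N) u (q : point N) a : leaf (tgt e) -> valid_point q ->
  0 <= a <= u -> u <= len e -> (q.1 = e -> q.2 <= a) -> u - a <= dist (e, u) q.
Proof.
move=> lf [q0 ql] au ul qa; have te := incident_tgt e.
have [Pt1 Pt2] : len e - a <= dV (tgt e) (src q.1) + q.2 /\
                 len e - a <= dV (tgt e) (tgt q.1) + (len q.1 - q.2).
  case: (eqVneq q.1 e) => [qe | /eqP qe].
    have := dV_leaf gN lf te (proj1 gN e).
    by move: q0; rewrite qe (dVii gN); have := qa qe; lra.
  have := dV_leaf_other lf te qe (incident_src q.1).
  have := dV_leaf_other lf te qe (incident_tgt q.1).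
  lra.
have := dV_ge0 gN (src e) (src q.1); have := dV_ge0 gN (src e) (tgt q.1) => ??.
apply: (dist_ge (Ps := 0) (Pt := len e - a)); try lra.
by move=> /qa ?; split_Rabs; lra.
Qed.

End PointDistance.

(** * Shares and payoffs *)

Section Shares.
Variables (N : network) (n : nat) (x : profile N n).

Lemma share_ge0 j (c : point N) : 0 <= share x j c.
Proof.
rewrite /share; case: closest; last lra.
have := pos_INR (nb_closest_locs x c); have := pos_INR (nb_colocated x j) => ??.
case: (Req_dec (INR (nb_closest_locs x c) * INR (nb_colocated x j)) 0) => [-> | ?].
  by rewrite Rinv_0; lra.
by apply/Rlt_le/Rinv_0_lt_compat; nra.
Qed.

Lemma share_eq_of_leRb j (c c' : point N) :
  (fun p : 'I_n * 'I_n => leRb (dist c (x p.1)) (dist c (x p.2))) =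
  (fun p => leRb (dist c' (x p.1)) (dist c' (x p.2))) ->
  share x j c = share x j c'.
Proof.
move=> cc'; have cl i : closest x c i = closest x c' i.
  by apply: eq_forallb => k; apply: (congr1 (@^~ (i, k)) cc').
rewrite /share cl; suff -> : nb_closest_locs x c = nb_closest_locs x c' by [].
by apply: eq_card => k; rewrite !inE cl.
Qed.

Lemma dist_affine_right (e : E N) q al be t :
  affine_right (fun u => dist (e, al + be * u) q) t.
Proof.
rewrite /dist /=; case: (e == q.1); repeat first
  [ apply: affine_right_const | apply: affine_right_id | apply: affine_right_min
  | apply: affine_right_abs | apply: affine_right_add | apply: affine_right_sub
  | apply: affine_right_opp | apply: affine_right_scale ].
Qed.

Lemma share_const_right j (e : E N) al be t :
  const_right (fun u => share x j (e, al + be * u)) t.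
Proof.
have [d [d0 cd]] : const_right (fun u (p : 'I_n * 'I_n) =>
    leRb (dist (e, al + be * u) (x p.1)) (dist (e, al + be * u) (x p.2))) t.
  by apply: const_right_fin => p; apply: const_right_leRb; apply: dist_affine_right.
by exists d; split => // u v ut vt; apply: share_eq_of_leRb; apply: cd.
Qed.

Lemma ex_RInt_share j (e : E N) a b : a <= b -> ex_RInt (fun u => share x j (e, u)) a b.
Proof.
move=> ab; apply: ex_RInt_locally_const => // t _.
  have [d [d0 cd]] := share_const_right j e 0 1 t.
  by exists d; split => // u v ut vt; move: (cd u v ut vt); rewrite !Rplus_0_l !Rmult_1_l.
have [d [d0 cd]] := share_const_right j e 0 (-1) (- t).
exists d; split => // u v ut vt; move: (cd (- u) (- v) ltac:(lra) ltac:(lra)).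
by rewrite !Rplus_0_l -!Ropp_mult_distr_l !Rmult_1_l !Ropp_involutive.
Qed.

End Shares.

Section ShareSum.
Variables (N : network) (n : nat) (x : profile N n) (c : point N).
Hypotheses (gN : good_network N) (vc : valid_point c).

(* The location counted in [nb_closest_locs] for player [j] is that of its
   least-indexed colocated player [rep j]. *)
Definition first_at (j : 'I_n) : bool :=
  [forall k : 'I_n, (k < j)%N ==> ~~ samept (x k) (x j)].

Definition rep (j : 'I_n) : 'I_n := [arg min_(k < j | samept (x k) (x j)) (k : nat)].

Lemma samept_rep j : samept (x (rep j)) (x j).
Proof. by rewrite /rep; case: arg_minnP => //; apply: samept_refl. Qed.

Lemma rep_min j k : samept (x k) (x j) -> (rep j <= k)%N.
Proof. by rewrite /rep; case: arg_minnP => [|i _ imin /imin]; first apply: samept_refl. Qed.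

Lemma first_at_rep j : first_at (rep j).
Proof.
apply/forallP => k; apply/implyP => kr; apply/negP => kj.
by have := rep_min (samept_trans kj (samept_rep j)); rewrite leqNgt kr.
Qed.

Lemma rep_first_at j r : first_at r -> samept (x r) (x j) -> rep j = r.
Proof.
move=> /forallP fr rj; apply/val_inj/eqP; rewrite eqn_leq rep_min //= leqNgt.
apply/negP => /(implyP (fr (rep j))); apply/negP/negPn.
exact: samept_trans (samept_rep j) (samept_sym rj).
Qed.

Lemma closest_samept j k : samept (x k) (x j) -> closest x c k = closest x c j.
Proof. by move=> kj; apply: eq_forallb => m; rewrite (samept_dist gN vc kj). Qed.

Lemma nb_colocated_samept j k : samept (x k) (x j) -> nb_colocated x k = nb_colocated x j.
Proof.
move=> kj; apply: eq_card => m; rewrite !inE.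
by apply/idP/idP => mk; [apply: samept_trans mk kj | apply: samept_trans mk (samept_sym kj)].
Qed.

(* Grouping the players by location, each closest location contributes
   [1 / nb_closest_locs]. *)
Lemma sum_share_le1 : \big[Rplus/0]_(j < n) share x j c <= 1.
Proof.
set L := nb_closest_locs x c.
rewrite (eq_bigr (fun j => if closest x c j then / (INR L * INR (nb_colocated x j)) else 0));
  last by [].
rewrite -big_mkcond (partition_big rep (fun r => closest x c r && first_at r)); last first.
  by move=> j cj; rewrite first_at_rep andbT (closest_samept (samept_rep j)).
rewrite (eq_bigr (fun _ => / INR L)); last first.
  move=> r /andP [cr fr].
  rewrite (eq_bigl (fun j => samept (x j) (x r))); last first.
    move=> j; apply/andP/idP => [[_ /eqP <-] | jr]; first exact/samept_sym/samept_rep.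
    by rewrite (closest_samept jr) cr; split => //; apply/eqP/rep_first_at/samept_sym.
  rewrite (eq_bigr (fun _ => / (INR L * INR (nb_colocated x r)))); last first.
    by move=> j /nb_colocated_samept ->.
  have Cr : (0 < nb_colocated x r)%N by apply/card_gt0P; exists r; rewrite inE samept_refl.
  have Lr : (0 < L)%N by apply/card_gt0P; exists r; rewrite inE cr.
  have := lt_0_INR _ (ltP Cr); have := lt_0_INR _ (ltP Lr).
  rewrite big_Rplus_const.
  have -> : #|(fun j => samept (x j) (x r))| = nb_colocated x r by apply: eq_card.
  by move=> ??; field; lra.
rewrite big_Rplus_const; have -> : #|[pred r | closest x c r && first_at r]| = L by [].
case: (posnP L) => [-> | L0]; first by rewrite Rmult_0_l; lra.
by rewrite Rinv_r; [lra | apply/not_0_INR/eqP; rewrite -lt0n].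
Qed.

End ShareSum.

Lemma RInt_big_Rplus (I : Type) (s : seq I) (F : I -> R -> R) a b :
  (forall i, ex_RInt (F i) a b) ->
  ex_RInt (fun t => \big[Rplus/0]_(i <- s) F i t) a b /\
  RInt (fun t => \big[Rplus/0]_(i <- s) F i t) a b = \big[Rplus/0]_(i <- s) RInt (F i) a b.
Proof.
move=> IF; elim: s => [|i s [IH1 IH2]].
  have -> : (fun t => \big[Rplus/0]_(i <- [::]) F i t) = fun _ => 0.
    by apply: functional_extensionality => t; rewrite big_nil.
  by rewrite big_nil RInt_const /scal /= /mult /= Rmult_0_r; split => //; apply: ex_RInt_const.
have -> : (fun t => \big[Rplus/0]_(j <- i :: s) F j t) =
          fun t => plus (F i t) (\big[Rplus/0]_(j <- s) F j t).
  by apply: functional_extensionality => t; rewrite big_cons.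
by rewrite big_cons -IH2; split; [apply: ex_RInt_plus | apply: RInt_plus].
Qed.

Section Payoffs.
Variables (N : network) (n : nat) (x : profile N n).
Hypothesis gN : good_network N.

Lemma Lambda_ge0 : 0 <= Lambda N.
Proof. by apply: big_Rplus_ge0 => f _; apply: len_ge0. Qed.

Lemma edge_payoff_ge0 j (e : E N) : 0 <= Defs.RInt (fun t => share x j (e, t)) 0 (len e).
Proof.
have el := len_ge0 gN e; rewrite Defs_RIntE; last exact: ex_RInt_share.
by apply: RInt_ge_0 => // [|t _]; [apply: ex_RInt_share | apply: share_ge0].
Qed.

Lemma sum_payoff_le_Lambda : \big[Rplus/0]_(j < n) payoff x j <= Lambda N.
Proof.
rewrite /payoff exchange_big /Lambda; apply: big_Rplus_le => e _.
have el := len_ge0 gN e.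
rewrite (eq_bigr (fun j => RInt (fun t => share x j (e, t)) 0 (len e))); last first.
  by move=> j _; apply: Defs_RIntE; apply: ex_RInt_share.
have [Isum <-] := RInt_big_Rplus (index_enum 'I_n) (fun j => ex_RInt_share x j e el).
apply: (Rle_trans _ (RInt (fun _ => 1) 0 (len e))).
  apply: RInt_le => // [|t tl]; first exact: ex_RInt_const.
  by apply: sum_share_le1 => //; split => /=; lra.
by rewrite RInt_const /scal /= /mult /=; lra.
Qed.

Lemma payoff_ge_of_share1 j (e : E N) lo hi : 0 <= lo <= hi -> hi <= len e ->
  (forall u, lo < u < hi -> share x j (e, u) = 1) -> hi - lo <= payoff x j.
Proof.
move=> lohi hil s1; rewrite /payoff (bigD1 e) //=.
have : 0 <= \big[Rplus/0]_(f | f != e) Defs.RInt (fun t => share x j (f, t)) 0 (len f).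
  by apply: big_Rplus_ge0 => f _; apply: edge_payoff_ge0.
suff : hi - lo <= Defs.RInt (fun t => share x j (e, t)) 0 (len e) by lra.
have I a b : a <= b -> ex_RInt (fun t => share x j (e, t)) a b by apply: ex_RInt_share.
have I0 a b : a <= b -> 0 <= RInt (fun t => share x j (e, t)) a b.
  by move=> ab; apply: RInt_ge_0 => // [|t _]; [apply: I | apply: share_ge0].
rewrite Defs_RIntE; last by apply: I; lra.
rewrite -(RInt_Chasles _ 0 lo (len e)); try (apply: I; lra).
rewrite -(RInt_Chasles _ lo hi (len e)); try (apply: I; lra).
rewrite (RInt_ext _ (fun _ => 1) lo hi); last first.
  by move=> t; rewrite Rmin_left ?Rmax_right; try lra; apply: s1.
rewrite RInt_const /scal /= /mult /= /plus /=.
by have := I0 0 lo ltac:(lra); have := I0 hi (len e) ltac:(lra); lra.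
Qed.

Lemma share_deviate_eq1 j y (c : point N) : valid_point c ->
  (forall k, k != j -> dist c y < dist c (x k)) -> share (deviate x j y) j c = 1.
Proof.
move=> vc yc; set x' := deviate x j y.
have x'j : x' j = y by rewrite /x' /deviate eqxx.
have x'k k : k != j -> x' k = x k by move=> kj; rewrite /x' /deviate (negbTE kj).
have apart k : k != j -> ~~ samept (x' k) (x' j).
  move=> kj; apply/negP; rewrite x'j x'k // => /(samept_dist gN vc).
  by have := yc k kj; lra.
have cl k : closest x' c k = (k == j).
  case: (eqVneq k j) => [-> | kj].
    apply/forallP => m; apply/leRbP; rewrite x'j.
    by case: (eqVneq m j) => [-> | mj]; [rewrite x'j; lra | rewrite x'k //; apply/Rlt_le/yc].
  by apply/negP => /forallP /(_ j) /leRbP; rewrite x'j x'k //; have := yc k kj; lra.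
rewrite /share cl eqxx.
have -> : nb_colocated x' j = 1%N.
  rewrite /nb_colocated -(card1 j); apply: eq_card => k; rewrite !inE.
  by case: (eqVneq k j) => [-> | kj]; [apply: samept_refl | apply/negbTE/apart].
have -> : nb_closest_locs x' c = 1%N.
  rewrite /nb_closest_locs -(card1 j); apply: eq_card => k; rewrite !inE cl.
  case: (eqVneq k j) => [-> | //]; apply/forallP => m; apply/implyP => mj.
  by apply: apart; apply: contraTneq mj => ->; rewrite ltnn.
by rewrite /= Rmult_1_l Rinv_1.
Qed.

End Payoffs.

(** * Profitable deviations *)

Lemma Rle_of_forall_sub_le a c : 0 <= c -> (forall d, 0 < d < a -> a - d <= c) -> a <= c.
Proof.
move=> c0 ac; apply: Rnot_lt_le => ca.
by have := ac ((a - c) / 2) ltac:(lra); lra.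
Qed.

Section Equilibrium.
Variables (N : network) (n : nat) (x : profile N n).
Hypotheses (gN : good_network N) (eqx : nash_equilibrium x) (n0 : (0 < n)%N).

Lemma INR_gt0 : 0 < INR n.
Proof. by apply: lt_0_INR; apply/ltP. Qed.

Lemma average_ge0 : 0 <= Lambda N / INR n.
Proof. exact: Rmult_le_pos (Lambda_ge0 gN) (Rlt_le _ _ (Rinv_0_lt_compat _ INR_gt0)). Qed.

(* Moving to [s], a player with at most the average payoff attracts all of
   [(lo, hi)]. *)
Lemma capture_le (e : E N) s lo hi : 0 <= s <= len e -> 0 <= lo <= hi -> hi <= len e ->
  (forall u k, lo < u < hi -> Rabs (u - s) < dist (e, u) (x k)) ->
  hi - lo <= Lambda N / INR n.
Proof.
move=> se lohi hie closer; have := INR_gt0 => n0R.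
have [j pj] : exists j, payoff x j <= Lambda N / INR n.
  apply: exists_le_of_sum_le n0 _; rewrite /Rdiv -Rmult_assoc Rinv_r_simpl_m; last lra.
  exact: sum_payoff_le_Lambda x gN.
have := proj2 eqx j (e, s) se.
suff : hi - lo <= payoff (deviate x j (e, s)) j by lra.
apply: (payoff_ge_of_share1 gN (e := e)) => // u ul.
apply: (share_deviate_eq1 gN) => [|k _]; first by split=> /=; lra.
exact: Rle_lt_trans (dist_same_edge_le e u s) (closer u k ul).
Qed.

Lemma gap_le (e : E N) a b : 0 <= a <= b -> b <= len e ->
  (forall k t, a < t < b -> ~~ samept (x k) (e, t)) -> (b - a) / 2 <= Lambda N / INR n.
Proof.
move=> ab be free; set m := (a + b) / 2; set w := (b - a) / 2.
have -> : w = m + w / 2 - (m - w / 2) by rewrite /m /w; field.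
apply: (capture_le (e := e) (s := m)); try (rewrite /m /w; lra).
move=> u k ul; apply: (Rlt_le_trans _ (Rmin (u - a) (b - u))).
  by apply: Rmin_glb_lt; rewrite /m /w in ul *; split_Rabs; lra.
apply: (dist_ge_gap gN); try (rewrite /m /w in ul; lra); first exact: proj1 eqx k.
move=> ke; case: (Rle_lt_dec (x k).2 a) => [|ak]; [by left | right].
apply: Rnot_lt_le => kb; move: (free k _ (conj ak kb)).
by rewrite (samept_on_edge ke).
Qed.

Lemma src_leaf_le (e : E N) b : leaf (src e) -> 0 <= b <= len e ->
  (forall k t, 0 <= t < b -> ~~ samept (x k) (e, t)) -> b <= Lambda N / INR n.
Proof.
move=> lf be free; apply: Rle_of_forall_sub_le => [|d db]; first exact: average_ge0.
suff : b - d / 2 - 0 <= Lambda N / INR n by lra.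
apply: (capture_le (e := e) (s := b - d)); try lra.
move=> u k ul; apply: (Rlt_le_trans _ (b - u)); first by split_Rabs; lra.
apply: (dist_ge_src_leaf gN) => //; try lra; first exact: proj1 eqx k.
move=> ke; apply: Rnot_lt_le => kb; move: (free k _ (conj (proj1 (proj1 eqx k)) kb)).
by rewrite (samept_on_edge ke).
Qed.

Lemma tgt_leaf_le (e : E N) a : leaf (tgt e) -> 0 <= a <= len e ->
  (forall k t, a < t <= len e -> ~~ samept (x k) (e, t)) -> len e - a <= Lambda N / INR n.
Proof.
move=> lf ae free; apply: Rle_of_forall_sub_le => [|d da]; first exact: average_ge0.
suff : len e - (a + d / 2) <= Lambda N / INR n by lra.
apply: (capture_le (e := e) (s := a + d)); try lra.
move=> u k ul; apply: (Rlt_le_trans _ (u - a)); first by split_Rabs; lra.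
apply: (dist_ge_tgt_leaf gN) => //; try lra; first exact: proj1 eqx k.
move=> ke; apply: Rnot_lt_le => ak.
have := proj2 (proj1 eqx k); rewrite ke => kl.
by move: (free k _ (conj ak kl)); rewrite (samept_on_edge ke).
Qed.

End Equilibrium.

Unset Implicit Arguments.

Theorem mainTheorem13 (N : network) (n : nat) (x : profile N n)
  (e : E N) (sa sb : R) :
  good_network N ->
  nash_equilibrium x ->
  vertex_property x ->
  half_interval x e sa sb ->
  Rabs (sb - sa) <= Lambda N / INR n.
Proof.
move=> gN eqx _ [sa_e [sb_e hx]].
have n0 : (0 < n)%N by case: hx => [[[i _] _] | [i _]]; apply: leq_ltn_trans (ltn_ord i).
case: hx => [[_ [[[-> lf] | [-> lf]] free]] | [_ [_ [tl [_ [tl_e [_ [free ->]]]]]]]].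
- rewrite Rminus_0_l Rabs_Ropp Rabs_right; last lra.
  apply: (src_leaf_le gN eqx n0 lf) => // k t [t0 ts]; apply: free.
  by case: (Req_dec t 0) => [-> | ?]; [right | left; right; lra].
- rewrite Rabs_right; last lra.
  apply: (tgt_leaf_le gN eqx n0 lf) => // k t [st te]; apply: free.
  by case: (Req_dec t (len e)) => [-> | ?]; [right | left; left; lra].
- have -> : Rabs ((sa + tl) / 2 - sa) = (Rmax sa tl - Rmin sa tl) / 2.
    by rewrite /Rmax /Rmin; case: Rle_dec => ?; split_Rabs; lra.
  apply: (gap_le gN eqx n0 (e := e)) => [|| k t]; try (rewrite /Rmax /Rmin; case: Rle_dec; lra).
  by move=> mt; apply: free; move: mt; rewrite /Rmax /Rmin /strictly_between;
    case: Rle_dec => ? ?; [left | right]; lra.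
Qed.
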